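(* Let $k>0$ and $\ell\ge 0$ be integers, let $S_1,\dots,S_k$ be discrete segments of length at least $2$, and let $T_1,\dots,T_\ell$ be discrete segments of length $1$. Let $X = S_1\times\dots\times S_k\times T_1\times\dots\times T_\ell \subseteq \mathbb{Z}^{k+\ell}$. Then $\mathrm{rc}(X) = 2k+\ell$.
   Context: A discrete segment of length $b-a$ is a set $\{a,a+1,\dots,b\}$ with $a,b\in\mathbb{Z}$, $a\le b$. $\mathrm{rc}(X)$ is the smallest number of facets of a polyhedron $P\subseteq\mathbb{R}^n$ with $P\cap\mathbb{Z}^n = X$. *)

From HB Require Import structures.
From mathcomp Require Import all_boot all_order all_algebra.
From mathcomp Require Import reals.
Set Implicit Arguments. Unset Strict Implicit. Unset Printing Implicit Defensive.
Import Order.TTheory GRing.Theory Num.Theory.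
Local Open Scope ring_scope.

Section Polyhedra.
Variable R : realFieldType.

Definition dotp n (a x : 'I_n -> R) : R := \sum_(i < n) a i * x i.

Definition polyhedron_of n m (A : 'I_m -> 'I_n -> R) (b : 'I_m -> R)
  (x : 'I_n -> R) : Prop := forall j, dotp (A j) x <= b j.

Definition is_polyhedron n (P : ('I_n -> R) -> Prop) : Prop :=
  exists m (A : 'I_m -> 'I_n -> R) (b : 'I_m -> R),
    forall x, P x <-> polyhedron_of A b x.

(* F is a face of P: the intersection of P with the boundary hyperplane of a
   valid inequality (a = 0 allowed, giving P itself or the empty face). *)
Definition is_face n (P F : ('I_n -> R) -> Prop) : Prop :=
  exists (a : 'I_n -> R) (b : R),
    (forall x, P x -> dotp a x <= b) /\
    (forall x, F x <-> (P x /\ dotp a x = b)).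

Definition is_facet n (P F : ('I_n -> R) -> Prop) : Prop :=
  [/\ is_face P F, (exists x, F x), (exists x, P x /\ ~ F x) &
      forall G, is_face P G -> (exists x, P x /\ ~ G x) ->
        (forall x, F x -> G x) -> forall x, G x -> F x].

Definition num_facets n (P : ('I_n -> R) -> Prop) (m : nat) : Prop :=
  exists f : 'I_m -> (('I_n -> R) -> Prop),
    (forall i j, (forall x, f i x <-> f j x) -> i = j) /\
    (forall F, is_facet P F <-> exists i, forall x, F x <-> f i x).

Definition int_points_are n (P : ('I_n -> R) -> Prop)
  (X : ('I_n -> int) -> Prop) : Prop :=
  forall z : 'I_n -> int, P (fun i => (z i)%:~R) <-> X z.

Definition rc_is n (X : ('I_n -> int) -> Prop) (r : nat) : Prop :=
  (exists P, [/\ is_polyhedron P, int_points_are P X & num_facets P r]) /\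
  (forall P m, is_polyhedron P -> int_points_are P X -> num_facets P m ->
     (r <= m)%N).

End Polyhedra.

Definition box_X k l (a b : 'I_k -> int) (c : 'I_l -> int)
  (z : 'I_(k + l) -> int) : Prop :=
  (forall i : 'I_k, a i <= z (lshift l i) <= b i) /\
  (forall j : 'I_l, c j <= z (rshift k j) <= c j + 1).

From HB Require Import structures.
From mathcomp Require Import all_boot all_order all_algebra.
From mathcomp Require Import reals ring lra zify.
Set Implicit Arguments. Unset Strict Implicit. Unset Printing Implicit Defensive.
Import Order.TTheory GRing.Theory Num.Theory.
Local Open Scope ring_scope.

(* Let P = {x | A x <= beta} have integer points X and pass to an
   irredundant subsystem.  The centre of the box lies in the interior of conv X
   (moving it by half a unit in every coordinate stays in conv X), so each
   inequality of the irredundant subsystem defines a facet, and distinct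
   inequalities define distinct facets.  The 2k + l integer points just outside
   X beyond the sides x_i = a_i, x_i = b_i and y_j = c_j + 1 each violate some
   inequality, and no inequality is violated by two of them, since any two of
   them sum to the sum of two points of X, so their midpoint lies in P.

   Keep x_i >= a_i and, for i <> i0, x_i <= b_i; replace
   x_i0 <= b_i0 and the 2l bounds on the unit segments by the l + 1
   inequalities p_l >= 0 and 1/2 + g p_t + u_t >= 0 (t < l), where
   u_t = y_t - c_t - 1/2, p_0 = b_i0 - x_i0, p_(t+1) = 1/2 + g p_t - u_t and
   g = 1 / (4 (b_i0 - a_i0)).  At an integer point u_t is a half-integer, so
   p_(t+1) >= 0 and the t-th inequality give p_t >= 0 by backward induction;
   then g p_t <= 1/4 squeezes u_t to +-1/2.  Below p_t, u_t and g are
   [chain t], [tdev t] and [chain_coef]. *)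

Section DotProduct.
Variables (R : realFieldType) (n : nat).
Implicit Types (a g x y : 'I_n -> R) (s t : R).

Definition midpoint x y : 'I_n -> R := fun i => (x i + y i) / 2.

Lemma dotpC a x : dotp a x = dotp x a.
Proof. by apply: eq_bigr => i _; rewrite mulrC. Qed.

Lemma dotp_combr a x y s t :
  dotp a (fun i => s * x i + t * y i) = s * dotp a x + t * dotp a y.
Proof. by rewrite /dotp !mulr_sumr -big_split; apply: eq_bigr => i _ /=; ring. Qed.

Lemma dotp_combl a g x s t :
  dotp (fun i => s * a i + t * g i) x = s * dotp a x + t * dotp g x.
Proof. by rewrite dotpC dotp_combr !(dotpC x). Qed.

Lemma dotp_addZr a x y t :
  dotp a (fun i => x i + t * y i) = dotp a x + t * dotp a y.
Proof. by rewrite /dotp mulr_sumr -big_split; apply: eq_bigr => i _ /=; ring. Qed.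

Lemma dotpZl a x s : dotp (fun i => s * a i) x = s * dotp a x.
Proof. by rewrite /dotp mulr_sumr; apply: eq_bigr => i _; rewrite mulrA. Qed.

Lemma dotp0l x : dotp (fun _ => 0) x = 0.
Proof. by rewrite /dotp big1 // => i _; rewrite mul0r. Qed.

Lemma dotp_midpoint a x y :
  dotp a (midpoint x y) = (dotp a x + dotp a y) / 2.
Proof.
by rewrite /dotp -big_split mulr_suml; apply: eq_bigr => i _; rewrite /midpoint /=; ring.
Qed.

Lemma dotp_self_le0 a : dotp a a <= 0 -> a = fun _ => 0.
Proof.
move=> le0; have sq_ge0 i : 0 <= a i * a i by rewrite -expr2 sqr_ge0.
have /psumr_eq0P a0 : dotp a a = 0 by apply/eqP; rewrite eq_le le0 sumr_ge0.
apply: boolp.funext => i; have /eqP := a0 (fun i _ => sq_ge0 i) i isT.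
by rewrite mulf_eq0 orbb => /eqP.
Qed.

Lemma dotp_self_gt0 a : (exists i, a i != 0) -> 0 < dotp a a.
Proof.
case=> i ai; rewrite ltNge; apply/negP => /dotp_self_le0 a0.
by move: ai; rewrite a0 eqxx.
Qed.

Lemma nonzero_of_dotp_lt a x y : dotp a x < dotp a y -> exists i, a i != 0.
Proof.
move=> lt; apply: boolp.contrapT => nz.
have a0 : a = fun _ => 0.
  by apply: boolp.funext => i; apply/eqP/negPn/negP => ai; apply: nz; exists i.
by move: lt; rewrite a0 !dotp0l ltxx.
Qed.

End DotProduct.

Lemma leq_card_of_rel (T U : finType) (rel : T -> U -> Prop) (S : {set U}) :
  (forall t, exists2 u, u \in S & rel t u) ->
  (forall t t' u, rel t u -> rel t' u -> t = t') -> (#|T| <= #|S|)%N.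
Proof.
move=> ex inj; have /fin_all_exists [f hf] : forall t, exists u, u \in S /\ rel t u.
  by move=> t; have [u ? ?] := ex t; exists u.
have f_inj : injective f.
  by move=> t t' e; apply: (inj _ _ (f t)); [|rewrite e]; apply hf.
rewrite -(card_imset _ f_inj); apply: subset_leq_card.
by apply/subsetP => _ /imsetP [t _ ->]; apply hf.
Qed.

Section System.
Variables (R : realFieldType) (n m : nat).
Variables (A : 'I_m -> 'I_n -> R) (beta : 'I_m -> R).
Implicit Types (S : {set 'I_m}) (x y d g : 'I_n -> R).

Definition sat S x := forall j, j \in S -> dotp (A j) x <= beta j.

Definition irredundant S :=
  forall j, j \in S -> exists x, sat (S :\ j) x /\ beta j < dotp (A j) x.

Definition face_relint S j y :=
  dotp (A j) y = beta j /\ forall k, k \in S -> k != j -> dotp (A k) y < beta k.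

Lemma satS S S' x : S \subset S' -> sat S' x -> sat S x.
Proof. by move=> /subsetP sub h j /sub; apply: h. Qed.

Lemma sat_setT x : sat setT x <-> polyhedron_of A beta x.
Proof. by split=> h j //; apply: h; rewrite inE. Qed.

Lemma sat_midpoint S x y : sat S x -> sat S y -> sat S (midpoint x y).
Proof.
by move=> hx hy j jS; rewrite dotp_midpoint; have := hx j jS; have := hy j jS; lra.
Qed.

Lemma face_relint_sat S j y : face_relint S j y -> sat S y.
Proof.
case=> yj hy k kS; case: (eqVneq k j) => [->|kj]; first by rewrite yj.
exact/ltW/hy.
Qed.

Lemma exists_irredundant S0 : exists2 S, irredundant S & sat S = sat S0.
Proof.
have [N] := ubnP #|S0|; elim: N S0 => // N IH S0 /ltnSE leN.
case: (boolp.pselect (irredundant S0)) => [irr|]; first by exists S0.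
move=> /boolp.existsNP [j /boolp.not_implyP [jS0 /boolp.forallNP red]].
have eqS : sat (S0 :\ j) = sat S0.
  apply: boolp.funext => x; apply: boolp.propext; split; last exact/satS/subsetDl.
  move=> hx k kS0; case: (eqVneq k j) => [->|kj]; last by apply: hx; rewrite !inE kj.
  by rewrite leNgt; apply/negP => lt; apply: (red x).
have [|S irr eS] := IH (S0 :\ j); first by rewrite (cardsD1 j) jS0 in leN.
by exists S; rewrite // eS.
Qed.

Lemma sat_perturb S y d : sat S y ->
  (forall j, j \in S -> dotp (A j) y < beta j \/ dotp (A j) d <= 0) ->
  exists2 e, 0 < e & sat S (fun i => y i + e * d i).
Proof.
move=> hy hS.
(* a zero slack contributes nothing to [M], as [_ / 0 = 0] *)
pose M := \sum_(j in S) `|dotp (A j) d| / (beta j - dotp (A j) y).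
have term_ge0 j : j \in S -> 0 <= `|dotp (A j) d| / (beta j - dotp (A j) y).
  by move=> jS; rewrite divr_ge0 // subr_ge0 hy.
have M_ge0 : 0 <= M by apply: sumr_ge0.
have M1_gt0 : 0 < 1 + M by lra.
have e_gt0 : 0 < (1 + M)^-1 by rewrite invr_gt0.
exists (1 + M)^-1 => // j jS; rewrite dotp_addZr.
have hyj := hy j jS; case: (hS j jS) => [slack|]; last by nra.
set s := beta j - dotp (A j) y.
have termM : `|dotp (A j) d| / s <= M.
  by rewrite /M (bigD1 j) //= lerDl sumr_ge0 // => i /andP [/term_ge0].
have : dotp (A j) d <= s * M.
  apply: (le_trans (ler_norm _)); rewrite -ler_pdivrMl ?subr_gt0 //.
  by rewrite mulrC.
rewrite -(ler_pM2l e_gt0) => le_sM.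
have : (1 + M)^-1 * (s * M) = s - s * (1 + M)^-1 by field; apply: lt0r_neq0.
have : 0 <= s * (1 + M)^-1 by rewrite mulr_ge0 ?subr_ge0 // ltW.
rewrite /s in le_sM *; lra.
Qed.

Lemma valid_ineq_tight_multiple S j y g gam :
  j \in S -> face_relint S j y -> (exists i, A j i != 0) ->
  (forall x, sat S x -> dotp g x <= gam) -> dotp g y = gam ->
  exists lam, g = (fun i => lam * A j i) /\ gam = lam * beta j.
Proof.
move=> jS [yj yk] Aj_nz valid gy.
pose lam := dotp g (A j) / dotp (A j) (A j).
(* [r] is the part of [g] orthogonal to [A j]; moving [y] along [r] stays in
   the polyhedron, which forces [r = 0]. *)
pose r i := g i + (- lam) * A j i.
have Ajr : dotp (A j) r = 0.
  by rewrite dotp_addZr dotpC /lam; field; rewrite gt_eqF ?dotp_self_gt0.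
have [e e_gt0 sat_e] : exists2 e, 0 < e & sat S (fun i => y i + e * r i).
  apply: sat_perturb; first exact: (face_relint_sat (conj yj yk)).
  move=> k kS; case: (eqVneq k j) => [->|kj]; last by left; apply: yk.
  by right; rewrite Ajr.
have gr : dotp g r <= 0.
  by have := valid _ sat_e; rewrite dotp_addZr gy -(pmulr_rle0 _ e_gt0); lra.
have r0 : r = fun _ => 0.
  apply: dotp_self_le0; rewrite {1}/r dotpC dotp_addZr (dotpC r g) (dotpC r (A j)).
  by rewrite Ajr mulr0 addr0.
have g_lam : g = fun i => lam * A j i.
  by apply: boolp.funext => i; have := congr1 (fun f => f i) r0; rewrite /r; lra.
by exists lam; split; rewrite // -gy -yj g_lam dotpZl.
Qed.

Lemma exists_common_strict_point (C : ('I_n -> R) -> Prop) S :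
  (forall x y, C x -> C y -> C (midpoint x y)) -> (forall x, C x -> sat S x) ->
  (exists x, C x) -> (forall j, j \in S -> exists2 x, C x & dotp (A j) x < beta j) ->
  exists2 z, C z & forall j, j \in S -> dotp (A j) z < beta j.
Proof.
move=> C_mid C_sat [z0 Cz0] strict.
suff /(_ (enum S)) hs : forall s : seq 'I_m, {subset s <= S} ->
    exists2 z, C z & forall j, j \in s -> dotp (A j) z < beta j.
  have [|z Cz hz] := hs; first by move=> j; rewrite mem_enum.
  by exists z => // j jS; apply: hz; rewrite mem_enum.
elim=> [|j s IH] sub; first by exists z0.
have jS : j \in S by apply: sub; rewrite mem_head.
have subs : {subset s <= S} by move=> k ks; apply: sub; rewrite in_cons ks orbT.
have [z Cz hz] := IH subs; have [x Cx xj] := strict j jS.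
exists (midpoint z x) => [|k]; first exact: C_mid.
rewrite in_cons dotp_midpoint => /predU1P [->|ks].
  by have := C_sat z Cz j jS; lra.
by have := C_sat x Cx k (subs k ks); have := hz k ks; lra.
Qed.

Lemma card_le_violators (I : finType) (q : I -> 'I_n -> R) S :
  (forall i, ~ sat S (q i)) ->
  (forall i i', i != i' -> sat S (midpoint (q i) (q i'))) -> (#|I| <= #|S|)%N.
Proof.
move=> out mid.
apply: (@leq_card_of_rel _ _ (fun i j => j \in S /\ beta j < dotp (A j) (q i))).
  move=> i; apply: boolp.contrapT => none; apply: (out i) => j jS.
  by rewrite leNgt; apply/negP => lt; apply: none; exists j.
move=> i i' j [jS lt] [_ lt']; case: (eqVneq i i') => // ii'.
by exfalso; have := mid i i' ii' j jS; rewrite dotp_midpoint; lra.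
Qed.

End System.

Section Facets.
Variables (R : realFieldType) (n m : nat).
Variables (A : 'I_m -> 'I_n -> R) (beta : 'I_m -> R) (S : {set 'I_m}).
Variable x0 : 'I_n -> R.
Hypothesis irrS : irredundant A beta S.
Hypothesis x0_strict : forall j, j \in S -> dotp (A j) x0 < beta j.
Local Notation P := (sat A beta S).

Definition row_face j x := P x /\ dotp (A j) x = beta j.

Lemma sat_x0 : P x0.
Proof. by move=> j jS; apply/ltW/x0_strict. Qed.

Lemma row_face_face j : j \in S -> is_face P (row_face j).
Proof. by move=> jS; exists (A j), (beta j); split=> // x /(_ j jS). Qed.

Lemma row_face_proper j : j \in S -> exists x, P x /\ ~ row_face j x.
Proof.
move=> jS; exists x0; split; first exact: sat_x0.
by case=> _; apply/eqP; rewrite lt_eqF ?x0_strict.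
Qed.

Lemma row_nonzero j : j \in S -> exists i, A j i != 0.
Proof.
move=> jS; have [x [_ lt]] := irrS jS.
exact: (nonzero_of_dotp_lt (lt_trans (x0_strict jS) lt)).
Qed.

Lemma exists_face_relint j : j \in S -> exists y, face_relint A beta S j y.
Proof.
move=> jS; have [x [hx lt]] := irrS jS; have x0j := x0_strict jS.
pose t := (beta j - dotp (A j) x0) / (dotp (A j) x - dotp (A j) x0).
have t_gt0 : 0 < t by apply: divr_gt0; lra.
have t_lt1 : t < 1 by rewrite ltr_pdivrMr; lra.
exists (fun i => (1 - t) * x0 i + t * x i); split=> [|k kS kj]; rewrite dotp_combr.
  by rewrite /t; field; lra.
have := x0_strict kS.
have : dotp (A k) x <= beta k by apply: hx; rewrite !inE kj.
nra.
Qed.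

Lemma row_face_facet j : j \in S -> is_facet P (row_face j).
Proof.
move=> jS; have [y [yj yk]] := exists_face_relint jS.
have Py : P y := face_relint_sat (conj yj yk).
split; [exact: row_face_face | by exists y | exact: row_face_proper |].
move=> G [g [gam [valid hG]]] [p [Pp Gp]] sub x Gx.
have [_ gy] := (hG y).1 (sub y (conj Py yj)).
have [lam [g_lam gam_lam]] :=
  valid_ineq_tight_multiple jS (conj yj yk) (row_nonzero jS) valid gy.
have [Px gx] := (hG x).1 Gx; split=> //.
case: (eqVneq lam 0) => [lam0|lam_nz].
  by exfalso; apply: Gp; apply/hG; split; rewrite // g_lam gam_lam lam0 dotpZl !mul0r.
by apply: (mulfI lam_nz); rewrite -dotpZl -g_lam gx gam_lam.
Qed.

Lemma row_face_inj j j' : j \in S -> j' \in S ->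
  (forall x, row_face j x <-> row_face j' x) -> j = j'.
Proof.
move=> jS j'S e; case: (eqVneq j j') => // jj'.
have [y [yj' yk]] := exists_face_relint j'S.
have [_ yj] := (e y).2 (conj (face_relint_sat (conj yj' yk)) yj').
by have := yk j jS jj'; rewrite yj ltxx.
Qed.

Lemma facet_row_face F :
  is_facet P F -> exists2 j, j \in S & forall x, F x <-> row_face j x.
Proof.
case=> [[a [be [valid hF]]] [z0 Fz0] [p [Pp Fp]] maximal].
have F_P x : F x -> P x by move=> /hF [].
suff [j jS Fj] : exists2 j, j \in S & forall x, F x -> dotp (A j) x = beta j.
  have row_faceF : forall x, row_face j x -> F x.
    apply: maximal; [exact: row_face_face | exact: row_face_proper |].
    by move=> x Fx; split; [apply: F_P | apply: Fj].
  exists j => // x; split=> [Fx|/row_faceF //].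
  by split; [apply: F_P | apply: Fj].
(* Otherwise F has a point strictly inside every inequality; moving from it
   along the normal [a] of F stays in P, which forces [a = 0] and [F = P]. *)
apply: boolp.contrapT => none.
have strict j : j \in S -> exists2 x, F x & dotp (A j) x < beta j.
  move=> jS; apply: boolp.contrapT => nostrict; apply: none; exists j => // x Fx.
  apply/eqP; rewrite eq_le (F_P x Fx j jS) /= leNgt; apply/negP => lt.
  by apply: nostrict; exists x.
have F_mid x y : F x -> F y -> F (midpoint x y).
  move=> /hF [Px ax] /hF [Py ay]; apply/hF; split; first exact: sat_midpoint.
  by rewrite dotp_midpoint ax ay; field.
have [z Fz z_strict] := exists_common_strict_point F_mid F_P (ex_intro _ z0 Fz0) strict.
have [Pz az] := (hF z).1 Fz.
have [e e_gt0 sat_e] : exists2 e, 0 < e & P (fun i => z i + e * a i).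
  by apply: sat_perturb => // j jS; left; apply: z_strict.
have a0 : a = fun _ => 0.
  apply: dotp_self_le0; have := valid _ sat_e.
  by rewrite dotp_addZr az -(pmulr_rle0 _ e_gt0); lra.
by apply: Fp; apply/hF; split; rewrite // -az a0 !dotp0l.
Qed.

Lemma num_facets_irredundant : num_facets P #|S|.
Proof.
exists (fun i => row_face (enum_val i)); split.
  by move=> i i' /(row_face_inj (enum_valP i) (enum_valP i')) /enum_val_inj.
move=> F; split.
  by case/facet_row_face => j jS hj; exists (enum_rank_in jS j); rewrite enum_rankK_in.
case=> i hi; have -> : F = row_face (enum_val i).
  by apply: boolp.funext => x; apply: boolp.propext.
exact/row_face_facet/enum_valP.
Qed.

End Facets.

Lemma num_facets_le (R : realFieldType) n (P : ('I_n -> R) -> Prop) m1 m2 :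
  num_facets P m1 -> num_facets P m2 -> (m1 <= m2)%N.
Proof.
move=> [f1 [f1_inj f1_facets]] [f2 [_ f2_facets]].
rewrite -[m1]card_ord -[m2]card_ord -[#|'I_m2|]cardsT.
apply: (@leq_card_of_rel _ _ (fun i i' => forall x, f1 i x <-> f2 i' x)).
  move=> i; have /f2_facets [i' hi'] : is_facet P (f1 i) by apply/f1_facets; exists i.
  by exists i'; rewrite ?inE.
by move=> i i' u e e'; apply: f1_inj => x; rewrite e e'.
Qed.

Section Box.
Variables (k l : nat) (a b : 'I_k -> int) (c : 'I_l -> int).
Hypothesis hab : forall i, a i + 2 <= b i.
Local Notation n := (k + l)%N.

Lemma split_lshift (i : 'I_k) : split (lshift l i) = inl i.
Proof. exact: (unsplitK (inl i)). Qed.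

Lemma split_rshift (j : 'I_l) : split (rshift k j) = inr j.
Proof. exact: (unsplitK (inr j)). Qed.

Definition box_lo (t : 'I_n) : int :=
  match split t with inl i => a i | inr j => c j end.

Definition box_hi (t : 'I_n) : int :=
  match split t with inl i => b i | inr j => c j + 1 end.

Lemma box_XE z : box_X a b c z <-> forall t, box_lo t <= z t <= box_hi t.
Proof.
split=> [[hS hT] t|h]; last split=> [i|j].
- rewrite -(splitK t) /box_lo /box_hi.
  by case: (split t) => [i|j]; rewrite /= ?split_lshift ?split_rshift.
- by have := h (lshift l i); rewrite /box_lo /box_hi split_lshift.
- by have := h (rshift k j); rewrite /box_lo /box_hi split_rshift.
Qed.

Lemma box_lo_lt_hi t : box_lo t < box_hi t.
Proof. by rewrite /box_lo /box_hi; case: (split t) => [i|j]; [have := hab i|]; lia. Qed.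

Variables (R : realFieldType) (m : nat).
Variables (A : 'I_m -> 'I_n -> R) (beta : 'I_m -> R) (S : {set 'I_m}).
Hypothesis hX : int_points_are (sat A beta S) (box_X a b c).

Lemma sat_half_int s : (forall t, 2 * box_lo t <= s t <= 2 * box_hi t) ->
  sat A beta S (fun t => (s t)%:~R / 2).
Proof.
move=> hs; pose u t := (s t %/ 2)%Z; pose v t := s t - u t.
have box_uv t : (box_lo t <= u t <= box_hi t) && (box_lo t <= v t <= box_hi t).
  have := hs t; have := divz_eq (s t) 2.
  have := @modz_ge0 (s t) 2 isT; have := @ltz_mod (s t) 2 isT.
  by rewrite /v /u; lia.
have -> : (fun t => (s t)%:~R / 2 : R) =
          midpoint (fun t => (u t)%:~R) (fun t => (v t)%:~R).
  by apply: boolp.funext => t; rewrite /midpoint /v intrB; ring.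
by apply: sat_midpoint; apply/hX/box_XE => t; have /andP [] := box_uv t.
Qed.

Definition box_center : 'I_n -> R := fun t => (box_lo t + box_hi t)%:~R / 2.

Lemma sat_box_center : sat A beta S box_center.
Proof. by apply: sat_half_int => t; have := box_lo_lt_hi t; lia. Qed.

Lemma box_center_lt g : (exists i, g i != 0) ->
  exists2 p, sat A beta S p & dotp g box_center < dotp g p.
Proof.
case=> i gi; pose sgn t : int := if 0 <= g t then 1 else -1.
exists (fun t => (box_lo t + box_hi t + sgn t)%:~R / 2).
  by apply: sat_half_int => t; have := box_lo_lt_hi t; rewrite /sgn; case: ifP; lia.
have -> : dotp g (fun t => (box_lo t + box_hi t + sgn t)%:~R / 2) =
          dotp g box_center + \sum_t `|g t| / 2.
  rewrite /dotp -big_split; apply: eq_bigr => t _ /=.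
  rewrite intrD /box_center /sgn; case: ifP => [g_ge0|/negbT]; last rewrite -ltNge.
    by rewrite ger0_norm //= rmorph1; ring.
  by move=> g_lt0; rewrite ltr0_norm //= rmorphN1; ring.
rewrite ltrDl (bigD1 i) //=; apply: (@lt_le_trans _ _ (`|g i| / 2)).
  by rewrite divr_gt0 ?normr_gt0.
by rewrite lerDl; apply: sumr_ge0 => t _; rewrite divr_ge0.
Qed.

Lemma exists_strict_point :
  irredundant A beta S -> exists x0, forall j, j \in S -> dotp (A j) x0 < beta j.
Proof.
move=> irr; exists box_center => j jS; have [x [_ lt]] := irr j jS.
have center_j := sat_box_center jS.
have [p sat_p lt_p] := box_center_lt (nonzero_of_dotp_lt (le_lt_trans center_j lt)).
exact: lt_le_trans lt_p (sat_p j jS).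
Qed.

Definition box_exit (h : ('I_k + 'I_k) + 'I_l) (t : 'I_n) : int :=
  match split t, h with
  | inl i, inl (inl i') => if i' == i then a i - 1 else a i + 1
  | inl i, inl (inr i') => if i' == i then b i + 1 else a i + 1
  | inl i, inr _ => a i + 1
  | inr j, inr j' => if j' == j then c j + 2 else c j
  | inr j, inl _ => c j
  end.

Lemma box_exit_out h : ~ box_X a b c (box_exit h).
Proof.
move/box_XE; case: h => [[i|i]|j].
- by move/(_ (lshift l i)); rewrite /box_lo /box_exit split_lshift eqxx; lia.
- by move/(_ (lshift l i)); rewrite /box_hi /box_exit split_lshift eqxx; lia.
- by move/(_ (rshift k j)); rewrite /box_hi /box_exit split_rshift eqxx; lia.
Qed.

Lemma box_exit_mid h h' : h != h' ->
  forall t, 2 * box_lo t <= box_exit h t + box_exit h' t <= 2 * box_hi t.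
Proof.
move=> hh' t; rewrite /box_lo /box_hi /box_exit.
case: (split t) => [i|j]; [have := hab i|];
  case: h hh' => [[i1|i1]|j1]; case: h' => [[i2|i2]|j2] => hh';
  repeat (case: eqP => [?|?]; subst); rewrite ?eqxx in hh'; lia.
Qed.

Lemma box_rows_ge : (2 * k + l <= #|S|)%N.
Proof.
have -> : (2 * k + l = #|{: ('I_k + 'I_k) + 'I_l}|)%N.
  by rewrite !card_sum !card_ord; lia.
apply: (card_le_violators (q := fun h t => (box_exit h t)%:~R)).
  by move=> h /hX /box_exit_out.
move=> h h' hh'.
have -> : midpoint (fun t => (box_exit h t)%:~R) (fun t => (box_exit h' t)%:~R) =
          (fun t => (box_exit h t + box_exit h' t)%:~R / 2 : R).
  by apply: boolp.funext => t; rewrite /midpoint intrD.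
exact: sat_half_int (box_exit_mid hh').
Qed.

End Box.

Lemma box_polyhedron_facets (k l : nat) (a b : 'I_k -> int) (c : 'I_l -> int)
    (R : realFieldType) (m : nat) (A : 'I_m -> 'I_(k + l) -> R) (beta : 'I_m -> R)
    (P : ('I_(k + l) -> R) -> Prop) :
  (forall i, a i + 2 <= b i) -> (forall x, P x <-> polyhedron_of A beta x) ->
  int_points_are P (box_X a b c) ->
  exists S : {set 'I_m}, num_facets P #|S| /\ (2 * k + l <= #|S|)%N.
Proof.
move=> hab hP hX.
have eP : P = sat A beta setT.
  by apply: boolp.funext => x; apply: boolp.propext; rewrite hP sat_setT.
subst P; have [S irr eS] := exists_irredundant A beta setT; rewrite -eS in hX *.
have [x0 x0_strict] := exists_strict_point hab hX irr.
exists S; split; first exact: num_facets_irredundant irr x0_strict.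
exact: (box_rows_ge hab hX).
Qed.

Section Affine.
Variables (R : realFieldType) (n : nat).
Implicit Types (f g : ('I_n -> R) -> R).

Definition affine f := exists al be, forall x, f x = dotp al x + be.

Lemma affine_eq f g : affine f -> f =1 g -> affine g.
Proof. by case=> al [be hf] e; exists al, be => x; rewrite -e. Qed.

Lemma affine_cst v : affine (fun _ => v).
Proof. by exists (fun _ => 0), v => x; rewrite dotp0l add0r. Qed.

Lemma affine_coord t : affine (fun x => x t).
Proof.
exists (fun i => (i == t)%:R), 0 => x.
rewrite addr0 /dotp (bigD1 t) //= eqxx mul1r big1 ?addr0 // => i /negbTE ->.
by rewrite mul0r.
Qed.

Lemma affine_comb f g s u : affine f -> affine g -> affine (fun x => s * f x + u * g x).
Proof.
case=> al [be hf] [al' [be' hg]].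
exists (fun i => s * al i + u * al' i), (s * be + u * be') => x.
by rewrite dotp_combl hf hg; ring.
Qed.

Lemma polyhedron_of_affine (I : finType) (f : I -> ('I_n -> R) -> R) :
  (forall i, affine (f i)) ->
  exists (A : 'I_#|I| -> 'I_n -> R) (beta : 'I_#|I| -> R),
    forall x, (forall i, 0 <= f i x) <-> polyhedron_of A beta x.
Proof.
move=> /fin_all_exists [al /fin_all_exists [be hf]].
exists (fun j t => -1 * al (enum_val j) t), (fun j => be (enum_val j)) => x.
split=> [h j|h i].
  by rewrite dotpZl; have := h (enum_val j); rewrite hf; lra.
by have := h (enum_rank i); rewrite dotpZl enum_rankK hf; lra.
Qed.

End Affine.

Arguments affine_cst {R n}.
Arguments affine_coord {R n}.

Section Chain.
Variables (k l : nat) (a b : 'I_k -> int) (c : 'I_l -> int) (i0 : 'I_k).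
Hypothesis hab : forall i, a i + 2 <= b i.
Variable R : realFieldType.
Local Notation n := (k + l)%N.
Implicit Types (x : 'I_n -> R).

Definition chain_width : R := (b i0 - a i0)%:~R.
Definition chain_coef : R := (4 * chain_width)^-1.

Definition tdev (t : nat) x : R :=
  if insub t is Some j then x (rshift k j) - (c j)%:~R - 2^-1 else 0.

Fixpoint chain (t : nat) x : R :=
  if t is t'.+1 then 2^-1 + chain_coef * chain t' x - tdev t' x
  else (b i0)%:~R - x (lshift l i0).

Definition chain_row (r : ('I_k + 'I_k) + 'I_l) x : R :=
  match r with
  | inl (inl i) => x (lshift l i) - (a i)%:~R
  | inl (inr i) => if i == i0 then chain l x else (b i)%:~R - x (lshift l i)
  | inr t => 2^-1 + chain_coef * chain t x + tdev t x
  end.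

Definition chain_poly x := forall r, 0 <= chain_row r x.

Lemma chain_width_ge2 : 2 <= chain_width.
Proof.
have -> : (2 : R) = (2 : int)%:~R by [].
by rewrite ler_int; have := hab i0; lia.
Qed.

Lemma chain_coef_gt0 : 0 < chain_coef.
Proof. by rewrite invr_gt0; have := chain_width_ge2; lra. Qed.

Lemma chain_coef_width : chain_coef * chain_width = 4^-1.
Proof. by rewrite /chain_coef; have := chain_width_ge2 => ?; field; lra. Qed.

Lemma tdevE (t : 'I_l) x : tdev t x = x (rshift k t) - (c t)%:~R - 2^-1.
Proof. by rewrite /tdev valK. Qed.

Lemma tdev_affine t : affine (tdev t).
Proof.
rewrite /tdev; case: insubP => [j _ _|_]; last exact: affine_cst.
apply: (affine_eq (affine_comb 1 (-1) (affine_coord (rshift k j))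
                                      (affine_cst ((c j)%:~R + 2^-1)))).
by move=> x; ring.
Qed.

Lemma chain_affine t : affine (chain t).
Proof.
elim: t => [|t IH].
  apply: (affine_eq (affine_comb 1 (-1) (affine_cst (b i0)%:~R)
                                        (affine_coord (lshift l i0)))).
  by move=> x /=; ring.
apply: (affine_eq (affine_comb 1 (-1) (affine_comb 1 chain_coef (affine_cst 2^-1) IH)
                                      (tdev_affine t))).
by move=> x /=; ring.
Qed.

Lemma chain_row_affine r : affine (chain_row r).
Proof.
case: r => [[i|i]|t].
- apply: (affine_eq (affine_comb 1 (-1) (affine_coord (lshift l i))
                                        (affine_cst (a i)%:~R))).
  by move=> x /=; ring.
- rewrite /chain_row; case: eqP => _; first exact: chain_affine.
  apply: (affine_eq (affine_comb 1 (-1) (affine_cst (b i)%:~R)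
                                        (affine_coord (lshift l i)))).
  by move=> x /=; ring.
- apply: (affine_eq (affine_comb 1 1 (affine_comb 1 chain_coef (affine_cst 2^-1)
                                                     (chain_affine t))
                                     (tdev_affine t))).
  by move=> x /=; ring.
Qed.

Lemma chain_poly_of_box z : box_X a b c z -> chain_poly (fun t => (z t)%:~R).
Proof.
case=> hS hT; set x := fun t => _.
have dev_T (t : 'I_l) : - 2^-1 <= tdev t x <= 2^-1.
  rewrite tdevE /x -intrB; have /andP [lo hi] := hT t.
  have : 0 <= (z (rshift k t) - c t)%:~R :> R by rewrite ler0z; lia.
  have : (z (rshift k t) - c t)%:~R <= 1 :> R by rewrite lerz1; lia.
  by move=> ? ?; apply/andP; split; lra.
have dev_le t : tdev t x <= 2^-1.
  rewrite /tdev; case: insubP => [j _ _|_]; last by rewrite invr_ge0 ler0n.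
  by have /andP [_] := dev_T j; rewrite tdevE.
have chain_ge0 t : 0 <= chain t x.
  elim: t => [|t IH] /=; first by have /andP [_] := hS i0; rewrite /x subr_ge0 ler_int.
  by have := dev_le t; have := mulr_ge0 (ltW chain_coef_gt0) IH; lra.
case=> [[i|i]|t] /=.
- by have /andP [? _] := hS i; rewrite /x subr_ge0 ler_int.
- case: eqP => _; first exact: chain_ge0.
  by have /andP [_ ?] := hS i; rewrite /x subr_ge0 ler_int.
- by have := dev_T t; have := mulr_ge0 (ltW chain_coef_gt0) (chain_ge0 t); lra.
Qed.

Section ChainPolyToBox.
Variable z : 'I_n -> int.
Hypothesis hz : chain_poly (fun t => (z t)%:~R).

Lemma tdev_int (t : 'I_l) :
  tdev t (fun t => (z t)%:~R) = (z (rshift k t) - c t)%:~R - 2^-1.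
Proof. by rewrite tdevE intrB. Qed.

Lemma chain_ge0_step (t : 'I_l) :
  0 <= chain t.+1 (fun t => (z t)%:~R) -> 0 <= chain t (fun t => (z t)%:~R).
Proof.
have row := hz (inr t); rewrite /= tdev_int in row *.
move=> next; rewrite -(pmulr_rge0 _ chain_coef_gt0).
have [dev_le0|dev_ge1] : z (rshift k t) - c t <= 0 \/ 1 <= z (rshift k t) - c t by lia.
  by move: dev_le0; rewrite -(lerz0 R); lra.
by move: dev_ge1; rewrite -(ler1z R); lra.
Qed.

Lemma chain_ge0 t : (t <= l)%N -> 0 <= chain t (fun t => (z t)%:~R).
Proof.
suff ge0 d : (d <= l)%N -> 0 <= chain (l - d) (fun t => (z t)%:~R).
  by move=> le_tl; rewrite -(subKn le_tl); apply/ge0/leq_subr.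
elim: d => [_|d IH lt_dl]; first by have := hz (inl (inr i0)); rewrite subn0 /= eqxx.
have lt_l : (l - d.+1 < l)%N by lia.
have succ_t : (Ordinal lt_l).+1 = (l - d)%N by rewrite /= subnSK.
by apply: (@chain_ge0_step (Ordinal lt_l)); rewrite succ_t; apply/IH/ltnW.
Qed.

Lemma chain_le_width t : (t <= l)%N -> chain t (fun t => (z t)%:~R) <= chain_width.
Proof.
elim: t => [_|t IH lt_tl] /=.
  by have := hz (inl (inl i0)); rewrite /= /chain_width intrB; lra.
have row := hz (inr (Ordinal lt_tl)); rewrite /= in row.
have := IH (ltnW lt_tl); have := chain_coef_width; have := chain_width_ge2.
have := chain_coef_gt0; nra.
Qed.

Lemma chain_poly_unit_segment (t : 'I_l) : 0 <= z (rshift k t) - c t <= 1.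
Proof.
have next := chain_ge0 (ltn_ord t); have row := hz (inr t).
rewrite /= tdev_int in row next.
have := chain_le_width (ltnW (ltn_ord t)); have := chain_ge0 (ltnW (ltn_ord t)).
have := chain_coef_width; have := chain_width_ge2; have := chain_coef_gt0.
move=> ? ? ? ? ?.
have : (-1 : int)%:~R < (z (rshift k t) - c t)%:~R :> R by rewrite rmorphN1; nra.
have : (z (rshift k t) - c t)%:~R < (2 : int)%:~R :> R.
  by have -> : ((2 : int)%:~R : R) = 2 by []; nra.
by rewrite !ltr_int; lia.
Qed.

Lemma box_of_chain_poly : box_X a b c z.
Proof.
split=> [i|t]; last by have := chain_poly_unit_segment t; lia.
apply/andP; split; first by have := hz (inl (inl i)); rewrite /= subr_ge0 ler_int.
case: (eqVneq i i0) => [->|ne].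
  by have := chain_ge0 (leq0n l); rewrite /= subr_ge0 ler_int.
by have := hz (inl (inr i)); rewrite /= (negbTE ne) subr_ge0 ler_int.
Qed.

End ChainPolyToBox.

Lemma chain_poly_int_points : int_points_are chain_poly (box_X a b c).
Proof. by move=> z; split; [exact: box_of_chain_poly | exact: chain_poly_of_box]. Qed.

End Chain.

Unset Implicit Arguments.
Set Strict Implicit.
Theorem theorem5p2 (R : realType) (k l : nat) (a b : 'I_k -> int)
  (c : 'I_l -> int) :
  (0 < k)%N ->
  (forall i : 'I_k, a i + 2 <= b i) ->
  rc_is R (box_X a b c) (2 * k + l)%N.
Proof.
move=> k_gt0 hab; pose i0 := Ordinal k_gt0.
have [A [beta hP]] := polyhedron_of_affine (@chain_row_affine k l a b c i0 R).
have hX := @chain_poly_int_points k l a b c i0 hab R.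
split.
- have [S [facetsS leS]] := box_polyhedron_facets hab hP hX.
  exists (@chain_poly k l a b c i0 R); split; [by exists _, A, beta | exact: hX |].
  have geS : (#|S| <= 2 * k + l)%N.
    by apply: (leq_trans (max_card _)); rewrite card_ord !card_sum !card_ord addnn -mul2n.
  by have -> : (2 * k + l)%N = #|S| by apply/eqP; rewrite eqn_leq leS geS.
- move=> P m [m' [A' [beta' hP']]] hX' facetsP.
  have [S [facetsS leS]] := box_polyhedron_facets hab hP' hX'.
  exact: leq_trans leS (num_facets_le facetsS facetsP).
Qed.
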